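(* Let $A$ be an involutory Hopf algebra in a symmetric monoidal category $\mathcal{C}$ and let $(\phi\colon A\to I,\Omega\colon I\to A)$ be a good pair for $A$, with morphisms $f,h\colon A\to A$ as in axioms (GP4) and (GP5). Then: (a) $\nu_{(\phi,\Omega)}^2=1$; (b) with $H'=(\mathrm{id}_A\otimes\mu)(\Delta\otimes\mathrm{id}_A)$, one has $(\phi\otimes\phi)H'=\phi\otimes\phi$ and $H'(\Omega\otimes\Omega)=\Omega\otimes\Omega$; (c) for each $\epsilon\in\{0,1\}$, $(\mathrm{id}_A\otimes fS^\epsilon\otimes\mathrm{id}_A)\Delta_3\Omega=(\mathrm{id}_A\otimes S^\epsilon\otimes\mathrm{id}_A)\Delta_3\Omega$; (d) for each $\epsilon\in\{0,1\}$, $\phi\mu_3(\mathrm{id}_A\otimes S^\epsilon h\otimes\mathrm{id}_A)=\phi\mu_3(\mathrm{id}_A\otimes S^\epsilon\otimes\mathrm{id}_A)$.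
   Context: $\mathcal{C}$ is symmetric monoidal with unit $\mathbb{1}$, symmetry $\tau$, constraints suppressed. An object $I$ is invertible if $I\otimes J\cong\mathbb{1}$ for some $J$; then every $f\in\mathrm{End}(I)$ equals $\|f\|_I\,\mathrm{id}_I$ for a unique scalar $\|f\|_I\in\mathrm{End}(\mathbb{1})$. Hopf algebra $(A,\mu,\eta,\Delta,\varepsilon,S)$: bialgebra with invertible antipode; involutory means $S^2=\mathrm{id}_A$. $\mu_3=\mu(\mu\otimes\mathrm{id}_A)$, $\Delta_3=(\Delta\otimes\mathrm{id}_A)\Delta$. Good pair: a pair $(\phi\colon A\to I,\Omega\colon I\to A)$ with $I$ invertible such that (GP1) $\phi\Omega=\mathrm{id}_I$; (GP2) with $H=(\mu\otimes\mathrm{id}_A)(\mathrm{id}_A\otimes\Delta)$, $(\phi\otimes\phi)H=\phi\otimes\phi$ and $H(\Omega\otimes\Omega)=\Omega\otimes\Omega$; (GP3) with $\nu_{(\phi,\Omega)}=\|\phi S\Omega\|_I$, $\phi S=\nu_{(\phi,\Omega)}\phi$ and $S\Omega=\nu_{(\phi,\Omega)}\Omega$; (GP4) there is $f\colon A\to A$ with $\phi\mu\tau_{A,A}=\phi\mu(f\otimes\mathrm{id}_A)$ and $\Delta\Omega=(f\otimes\mathrm{id}_A)\Delta\Omega$; (GP5) there is $h\colon A\to A$ with $\tau_{A,A}\Delta\Omega=(\mathrm{id}_A\otimes h)\Delta\Omega$ and $\phi\mu=\phi\mu(\mathrm{id}_A\otimes h)$. *)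

From Stdlib Require Import ClassicalEpsilon.

Set Implicit Arguments.
Set Universe Polymorphism.

Record SymMonCat := {
  Ob : Type;
  Hom : Ob -> Ob -> Type;
  idm : forall a, Hom a a;
  comp : forall a b c, Hom b c -> Hom a b -> Hom a c;
  comp_id_l : forall a b (f : Hom a b), comp (idm b) f = f;
  comp_id_r : forall a b (f : Hom a b), comp f (idm a) = f;
  comp_assoc : forall a b c d (f : Hom a b) (g : Hom b c) (h : Hom c d),
      comp h (comp g f) = comp (comp h g) f;
  tens : Ob -> Ob -> Ob;
  tensm : forall a b c d, Hom a b -> Hom c d -> Hom (tens a c) (tens b d);
  tensm_id : forall a b, tensm (idm a) (idm b) = idm (tens a b);
  tensm_comp : forall a b c a' b' c' (f : Hom a b) (g : Hom b c)
      (f' : Hom a' b') (g' : Hom b' c'),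
      tensm (comp g f) (comp g' f') = comp (tensm g g') (tensm f f');
  unit : Ob;
  assoc : forall a b c, Hom (tens (tens a b) c) (tens a (tens b c));
  assoc_inv : forall a b c, Hom (tens a (tens b c)) (tens (tens a b) c);
  assoc_inv_l : forall a b c, comp (assoc_inv a b c) (assoc a b c) = idm _;
  assoc_inv_r : forall a b c, comp (assoc a b c) (assoc_inv a b c) = idm _;
  assoc_nat : forall a a' b b' c c' (f : Hom a a') (g : Hom b b') (h : Hom c c'),
      comp (assoc a' b' c') (tensm (tensm f g) h)
      = comp (tensm f (tensm g h)) (assoc a b c);
  lunit : forall a, Hom (tens unit a) a;
  lunit_inv : forall a, Hom a (tens unit a);
  lunit_inv_l : forall a, comp (lunit_inv a) (lunit a) = idm _;
  lunit_inv_r : forall a, comp (lunit a) (lunit_inv a) = idm _;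
  lunit_nat : forall a b (f : Hom a b),
      comp (lunit b) (tensm (idm unit) f) = comp f (lunit a);
  runit : forall a, Hom (tens a unit) a;
  runit_inv : forall a, Hom a (tens a unit);
  runit_inv_l : forall a, comp (runit_inv a) (runit a) = idm _;
  runit_inv_r : forall a, comp (runit a) (runit_inv a) = idm _;
  runit_nat : forall a b (f : Hom a b),
      comp (runit b) (tensm f (idm unit)) = comp f (runit a);
  pentagon : forall a b c d,
      comp (assoc a b (tens c d)) (assoc (tens a b) c d)
      = comp (tensm (idm a) (assoc b c d))
             (comp (assoc a (tens b c) d) (tensm (assoc a b c) (idm d)));
  triangle : forall a b,
      comp (tensm (idm a) (lunit b)) (assoc a unit b) = tensm (runit a) (idm b);
  braid : forall a b, Hom (tens a b) (tens b a);
  braid_nat : forall a a' b b' (f : Hom a a') (g : Hom b b'),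
      comp (braid a' b') (tensm f g) = comp (tensm g f) (braid a b);
  braid_sym : forall a b, comp (braid b a) (braid a b) = idm _;
  hexagon : forall a b c,
      comp (assoc b c a) (comp (braid a (tens b c)) (assoc a b c))
      = comp (tensm (idm b) (braid a c))
             (comp (assoc b a c) (tensm (braid a b) (idm c)))
}.

Arguments idm {s} a.
Arguments comp {s a b c} _ _.
Arguments tens {s} _ _.
Arguments tensm {s a b c d} _ _.
Arguments unit {s}.
Arguments assoc {s} a b c.
Arguments assoc_inv {s} a b c.
Arguments lunit {s} a.
Arguments lunit_inv {s} a.
Arguments runit {s} a.
Arguments runit_inv {s} a.
Arguments braid {s} a b.

Declare Scope cat_scope.
Delimit Scope cat_scope with cat.
Open Scope cat_scope.
Notation "g \o f" := (comp g f) (at level 40, left associativity) : cat_scope.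
Notation "f \ox g" := (tensm f g) (at level 35) : cat_scope.

Section Defs.
Variable C : SymMonCat.

Definition is_iso {a b : Ob C} (u : Hom C a b) : Prop :=
  exists v : Hom C b a, v \o u = idm a /\ u \o v = idm b.

Definition invertible (I : Ob C) : Prop :=
  exists (J : Ob C) (u : Hom C (tens I J) unit), is_iso u.

Definition scal (s : Hom C unit unit) {a b : Ob C} (f : Hom C a b) : Hom C a b :=
  lunit b \o (s \ox f) \o lunit_inv a.

(** ||g||_I : the (unique, when I is invertible) scalar s with g = s . id_I *)
Definition normI {I : Ob C} (g : Hom C I I) : Hom C unit unit :=
  epsilon (inhabits (idm unit)) (fun s => g = scal s (idm I)).

Record HopfAlg (A : Ob C) := {
  mu : Hom C (tens A A) A;
  eta : Hom C unit A;
  Delta : Hom C A (tens A A);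
  eps : Hom C A unit;
  S : Hom C A A;
  mu_assoc : mu \o (mu \ox idm A) = mu \o (idm A \ox mu) \o assoc A A A;
  mu_unit_l : mu \o (eta \ox idm A) = lunit A;
  mu_unit_r : mu \o (idm A \ox eta) = runit A;
  Delta_coassoc : assoc A A A \o (Delta \ox idm A) \o Delta
                  = (idm A \ox Delta) \o Delta;
  Delta_counit_l : (eps \ox idm A) \o Delta = lunit_inv A;
  Delta_counit_r : (idm A \ox eps) \o Delta = runit_inv A;
  bialg_mult : Delta \o mu
     = (mu \ox mu) \o assoc_inv A A (tens A A)
       \o (idm A \ox (assoc A A A \o (braid A A \ox idm A) \o assoc_inv A A A))
       \o assoc A A (tens A A) \o (Delta \ox Delta);
  bialg_unit : Delta \o eta = (eta \ox eta) \o lunit_inv unit;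
  bialg_counit : eps \o mu = lunit unit \o (eps \ox eps);
  bialg_eps_eta : eps \o eta = idm unit;
  antipode_l : mu \o (S \ox idm A) \o Delta = eta \o eps;
  antipode_r : mu \o (idm A \ox S) \o Delta = eta \o eps;
  antipode_invertible : is_iso S
}.

Definition involutory {A : Ob C} (H : HopfAlg A) : Prop := S H \o S H = idm A.

Definition mu3 {A : Ob C} (H : HopfAlg A) : Hom C (tens (tens A A) A) A :=
  mu H \o (mu H \ox idm A).
Definition Delta3 {A : Ob C} (H : HopfAlg A) : Hom C A (tens (tens A A) A) :=
  (Delta H \ox idm A) \o Delta H.

Definition Hmap {A : Ob C} (H : HopfAlg A) : Hom C (tens A A) (tens A A) :=
  (mu H \ox idm A) \o assoc_inv A A A \o (idm A \ox Delta H).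
Definition Hmap' {A : Ob C} (H : HopfAlg A) : Hom C (tens A A) (tens A A) :=
  (idm A \ox mu H) \o assoc A A A \o (Delta H \ox idm A).

Definition Spow {A : Ob C} (H : HopfAlg A) (e : bool) : Hom C A A :=
  if e then S H else idm A.

Definition nu {A I : Ob C} (H : HopfAlg A) (phi : Hom C A I) (Om : Hom C I A)
  : Hom C unit unit := normI (phi \o S H \o Om).

Definition GP4 {A I : Ob C} (H : HopfAlg A) (phi : Hom C A I) (Om : Hom C I A)
  (f : Hom C A A) : Prop :=
  phi \o mu H \o braid A A = phi \o mu H \o (f \ox idm A) /\
  Delta H \o Om = (f \ox idm A) \o Delta H \o Om.

Definition GP5 {A I : Ob C} (H : HopfAlg A) (phi : Hom C A I) (Om : Hom C I A)
  (h : Hom C A A) : Prop :=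
  braid A A \o Delta H \o Om = (idm A \ox h) \o Delta H \o Om /\
  phi \o mu H = phi \o mu H \o (idm A \ox h).

Definition good_pair {A I : Ob C} (H : HopfAlg A) (phi : Hom C A I) (Om : Hom C I A)
  : Prop :=
  invertible I /\
  phi \o Om = idm I /\
  (phi \ox phi) \o Hmap H = phi \ox phi /\
            Hmap H \o (Om \ox Om) = Om \ox Om /\
  phi \o S H = scal (nu H phi Om) phi /\
            S H \o Om = scal (nu H phi Om) Om /\
  (exists f, GP4 H phi Om f) /\
  (exists h, GP5 H phi Om h).

End Defs.

Arguments HopfAlg {C} A.
Arguments mu {C A} h.
Arguments eta {C A} h.
Arguments Delta {C A} h.
Arguments eps {C A} h.
Arguments S {C A} h.

(* With [n = nu . id_I], (GP3) reads [phi S = n phi] and [S Om = Om n]; from [S^2 = id]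
   and (GP1) we get [n^2 = id], and [nu^2 = 1] because scalars act faithfully on an
   invertible object.  The antipode is anti-multiplicative (it and [mu (S \ox S) tau] are
   both convolution inverses of [mu] in [Hom(A \ox A, A)]) and, dually, anti-comultiplicative;
   for involutory [S] this gives [H' = tau (S \ox S) H (S \ox S) tau], so (b) follows from
   (GP2), (GP3) and [n^2 = id].  For (c) with [S^0], coassociativity and (GP4) let [f] act on
   the first factor of [Delta3 Om], and the rotation supplied by (GP5) moves it to the middle;
   for [S^1], precomposing with [n] and using [Delta Om n = (S \ox S h) Delta Om] reduces it
   to that first-factor invariance.  Part (d) is the mirror argument. *)

Set Implicit Arguments.
Set Universe Polymorphism.

Arguments comp_id_l {s a b} f.
Arguments comp_id_r {s a b} f.
Arguments comp_assoc {s a b c d} f g h.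
Arguments tensm_id {s a b}.
Arguments tensm_comp {s a b c a' b' c'} f g f' g'.
Arguments assoc_inv_l {s a b c}.
Arguments assoc_inv_r {s a b c}.
Arguments assoc_nat {s a a' b b' c c'} f g h.
Arguments lunit_inv_l {s a}.
Arguments lunit_inv_r {s a}.
Arguments lunit_nat {s a b} f.
Arguments runit_inv_l {s a}.
Arguments runit_inv_r {s a}.
Arguments runit_nat {s a b} f.
Arguments triangle {s} a b.
Arguments braid_nat {s a a' b b'} f g.
Arguments braid_sym {s a b}.

Section Category.
Context {C : SymMonCat}.

(* After [cnorm] every composite is left-nested, so a redex [g \o f] only appears
   under an explicit postfix [X \o _]; these lemmas supply that postfix. *)
Lemma postcomp2 {a b c} {g : Hom C b c} {f : Hom C a b} {k : Hom C a c} :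
  g \o f = k -> forall {e} (X : Hom C c e), X \o g \o f = X \o k.
Proof. intros E e X. rewrite <- E, comp_assoc. reflexivity. Qed.

Lemma postcomp3 {a b c d} {h : Hom C c d} {g : Hom C b c} {f : Hom C a b} {k : Hom C a d} :
  h \o g \o f = k -> forall {e} (X : Hom C d e), X \o h \o g \o f = X \o k.
Proof. intros E e X. rewrite <- E, !comp_assoc. reflexivity. Qed.

Lemma postcomp4 {a b c d d'} {i : Hom C d d'} {h : Hom C c d} {g : Hom C b c}
  {f : Hom C a b} {k : Hom C a d'} :
  i \o h \o g \o f = k -> forall {e} (X : Hom C d' e), X \o i \o h \o g \o f = X \o k.
Proof. intros E e X. rewrite <- E, !comp_assoc. reflexivity. Qed.

Lemma postcomp5 {a b c d d' d''} {j : Hom C d' d''} {i : Hom C d d'} {h : Hom C c d}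
  {g : Hom C b c} {f : Hom C a b} {k : Hom C a d''} :
  j \o i \o h \o g \o f = k ->
  forall {e} (X : Hom C d'' e), X \o j \o i \o h \o g \o f = X \o k.
Proof. intros E e X. rewrite <- E, !comp_assoc. reflexivity. Qed.

End Category.

Ltac cnorm := repeat rewrite comp_assoc; repeat rewrite comp_id_l; repeat rewrite comp_id_r.
Ltac cnorm_in E := repeat rewrite comp_assoc in E; repeat rewrite comp_id_l in E;
  repeat rewrite comp_id_r in E.
Ltac crw E := first [ rewrite (postcomp5 E) | rewrite (postcomp4 E) | rewrite (postcomp3 E)
                    | rewrite (postcomp2 E) | rewrite E ]; cnorm.
Ltac crwl E := crw (eq_sym E).

Section Monoidal.
Context {C : SymMonCat}.

Lemma split_mono_cancel {a b c} (u : Hom C b c) (v : Hom C c b) :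
  v \o u = idm b -> forall x y : Hom C a b, u \o x = u \o y -> x = y.
Proof.
  intros Hvu x y E. rewrite <- (comp_id_l x), <- (comp_id_l y), <- Hvu, <- !comp_assoc, E.
  reflexivity.
Qed.

Lemma split_epi_cancel {a b c} (u : Hom C a b) (v : Hom C b a) :
  u \o v = idm b -> forall x y : Hom C b c, x \o u = y \o u -> x = y.
Proof.
  intros Huv x y E. rewrite <- (comp_id_r x), <- (comp_id_r y), <- Huv, !comp_assoc, E.
  reflexivity.
Qed.

Lemma tensm_split1 {a b c d} (f : Hom C a b) (g : Hom C c d) :
  f \ox g = (f \ox idm d) \o (idm a \ox g).
Proof. rewrite <- tensm_comp, comp_id_l, comp_id_r. reflexivity. Qed.

Lemma tensm_split2 {a b c d} (f : Hom C a b) (g : Hom C c d) :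
  f \ox g = (idm b \ox g) \o (f \ox idm c).
Proof. rewrite <- tensm_comp, comp_id_l, comp_id_r. reflexivity. Qed.

Lemma tensm_interchange {a b c d} (f : Hom C a b) (g : Hom C c d) :
  (f \ox idm d) \o (idm a \ox g) = (idm b \ox g) \o (f \ox idm c).
Proof. rewrite <- tensm_split1, <- tensm_split2. reflexivity. Qed.

Lemma idm_tensm_comp {a b c d} (g : Hom C b c) (f : Hom C a b) :
  idm d \ox (g \o f) = (idm d \ox g) \o (idm d \ox f).
Proof. rewrite <- tensm_comp, comp_id_l. reflexivity. Qed.

Lemma comp_tensm_idm {a b c d} (g : Hom C b c) (f : Hom C a b) :
  (g \o f) \ox idm d = (g \ox idm d) \o (f \ox idm d).
Proof. rewrite <- tensm_comp, comp_id_l. reflexivity. Qed.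

Lemma idm_tensm_inv (a : Ob C) {b c} {u : Hom C b c} {v : Hom C c b} :
  u \o v = idm c -> (idm a \ox u) \o (idm a \ox v) = idm _.
Proof. intro E. rewrite <- idm_tensm_comp, E. apply tensm_id. Qed.

Lemma tensm_idm_inv (a : Ob C) {b c} {u : Hom C b c} {v : Hom C c b} :
  u \o v = idm c -> (u \ox idm a) \o (v \ox idm a) = idm _.
Proof. intro E. rewrite <- comp_tensm_idm, E. apply tensm_id. Qed.

Lemma assoc_inv_nat {a a' b b' c c'} (f : Hom C a a') (g : Hom C b b') (h : Hom C c c') :
  assoc_inv a' b' c' \o (f \ox (g \ox h)) = ((f \ox g) \ox h) \o assoc_inv a b c.
Proof.
  apply (split_mono_cancel (assoc a' b' c') (assoc_inv _ _ _) assoc_inv_l). cnorm.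
  rewrite (@assoc_inv_r C a' b' c'). crw (assoc_nat f g h). crw (@assoc_inv_r C a b c).
  reflexivity.
Qed.

Lemma lunit_inv_nat {a b} (f : Hom C a b) :
  (idm unit \ox f) \o lunit_inv a = lunit_inv b \o f.
Proof.
  apply (split_mono_cancel (lunit b) (lunit_inv _) lunit_inv_l). cnorm.
  crw (lunit_nat f). crw (@lunit_inv_r C a). crw (@lunit_inv_r C b). reflexivity.
Qed.

Lemma runit_inv_nat {a b} (f : Hom C a b) :
  (f \ox idm unit) \o runit_inv a = runit_inv b \o f.
Proof.
  apply (split_mono_cancel (runit b) (runit_inv _) runit_inv_l). cnorm.
  crw (runit_nat f). crw (@runit_inv_r C a). crw (@runit_inv_r C b). reflexivity.
Qed.

Lemma pentagon' (a b c d : Ob C) : assoc a b (tens c d) \o assoc (tens a b) c d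
  = (idm a \ox assoc b c d) \o assoc a (tens b c) d \o (assoc a b c \ox idm d).
Proof. rewrite pentagon. cnorm. reflexivity. Qed.

Lemma hexagon' (a b c : Ob C) : assoc b c a \o braid a (tens b c) \o assoc a b c
  = (idm b \ox braid a c) \o assoc b a c \o (braid a b \ox idm c).
Proof. rewrite <- comp_assoc, hexagon. cnorm. reflexivity. Qed.

End Monoidal.

Section Units.
Context {C : SymMonCat}.
Implicit Types a b c d x y : Ob C.

Lemma idm_unit_tensm_inj {a b} (f g : Hom C a b) : idm unit \ox f = idm unit \ox g -> f = g.
Proof.
  intro E. apply (split_epi_cancel (lunit a) (lunit_inv a) lunit_inv_r).
  rewrite <- !lunit_nat, E. reflexivity.
Qed.

Lemma tensm_idm_unit_inj {a b} (f g : Hom C a b) : f \ox idm unit = g \ox idm unit -> f = g.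
Proof.
  intro E. apply (split_epi_cancel (runit a) (runit_inv a) runit_inv_r).
  rewrite <- !runit_nat, E. reflexivity.
Qed.

(* Kelly's argument: compare the pentagon for [unit, unit, x, y] with the triangle. *)
Lemma lunit_tens x y : lunit (tens x y) \o assoc unit x y = lunit x \ox idm y.
Proof.
  apply idm_unit_tensm_inj.
  apply (split_epi_cancel (assoc unit (tens unit x) y \o (assoc unit unit x \ox idm y))
           ((assoc_inv unit unit x \ox idm y) \o assoc_inv unit (tens unit x) y)).
  { cnorm. crw (tensm_idm_inv y (@assoc_inv_r C unit unit x)). apply assoc_inv_r. }
  cnorm. rewrite !idm_tensm_comp. cnorm.
  crwl (pentagon' unit unit x y). rewrite (triangle unit (tens x y)).
  rewrite <- tensm_id. crwl (assoc_nat (runit unit) (idm x) (idm y)).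
  crwl (assoc_nat (idm unit) (lunit x) (idm y)).
  crwl (@comp_tensm_idm _ _ _ _ y (idm unit \ox lunit x) (assoc unit unit x)).
  rewrite (triangle unit x). reflexivity.
Qed.

Lemma lunit_unit : lunit (@unit C) = runit unit.
Proof.
  assert (E : idm unit \ox lunit unit = lunit (tens (@unit C) unit)).
  { apply (split_mono_cancel (lunit unit) (lunit_inv unit) lunit_inv_l).
    rewrite lunit_nat. reflexivity. }
  apply tensm_idm_unit_inj. rewrite <- triangle, E, lunit_tens. reflexivity.
Qed.

Lemma lunit_braid x : lunit x \o braid x unit = runit x.
Proof.
  apply tensm_idm_unit_inj.
  apply (split_mono_cancel (braid x unit) (braid unit x) braid_sym).
  assert (E := f_equal (comp (lunit (tens unit x))) (hexagon' x unit unit)). cnorm_in E.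
  rewrite lunit_tens, lunit_nat in E. cnorm_in E. rewrite (postcomp2 (lunit_tens x unit)) in E.
  rewrite <- (braid_nat (idm x) (lunit unit)) in E. cnorm_in E.
  rewrite (postcomp2 (triangle x unit)) in E.
  rewrite comp_tensm_idm. cnorm. rewrite <- E. reflexivity.
Qed.

Lemma runit_tens x y : runit (tens x y) = (idm x \ox runit y) \o assoc x y unit.
Proof.
  apply tensm_idm_unit_inj.
  apply (split_mono_cancel (assoc x y unit) (assoc_inv x y unit) assoc_inv_l).
  rewrite <- triangle, comp_tensm_idm. cnorm. rewrite <- tensm_id.
  crw (assoc_nat (idm x) (idm y) (lunit unit)). crw (assoc_nat (idm x) (runit y) (idm unit)).
  rewrite <- triangle, idm_tensm_comp. cnorm. crwl (pentagon' x y unit unit). reflexivity.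
Qed.

Lemma lunit_inv_tens x y : assoc unit x y \o (lunit_inv x \ox idm y) = lunit_inv (tens x y).
Proof.
  apply (split_mono_cancel (lunit (tens x y)) (lunit_inv _) lunit_inv_l). cnorm.
  crw (lunit_tens x y). rewrite <- comp_tensm_idm, lunit_inv_r, tensm_id, lunit_inv_r.
  reflexivity.
Qed.

Lemma lunit_tens' x y : (lunit x \ox idm y) \o assoc_inv unit x y = lunit (tens x y).
Proof. rewrite <- lunit_tens. cnorm. crw (@assoc_inv_r C unit x y). reflexivity. Qed.

Lemma runit_inv_tens x y : assoc_inv x y unit \o (idm x \ox runit_inv y) = runit_inv (tens x y).
Proof.
  apply (split_mono_cancel (runit (tens x y)) (runit_inv _) runit_inv_l).
  rewrite runit_inv_r, runit_tens. cnorm. crw (@assoc_inv_r C x y unit).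
  rewrite <- idm_tensm_comp, runit_inv_r, tensm_id. reflexivity.
Qed.

Lemma braid_unit_r x : braid x unit = lunit_inv x \o runit x.
Proof. rewrite <- lunit_braid. cnorm. crw (@lunit_inv_l C x). reflexivity. Qed.

Lemma braid_unit_l x : braid unit x = runit_inv x \o lunit x.
Proof.
  apply (split_epi_cancel (braid x unit) (braid unit x) braid_sym).
  rewrite braid_sym, braid_unit_r. cnorm. crw (@lunit_inv_r C x). symmetry. apply runit_inv_l.
Qed.

End Units.

Section Scalars.
Context {C : SymMonCat}.

Lemma scal_idm_l (s : Hom C unit unit) {a b} (g : Hom C a b) : scal C s g = scal C s (idm b) \o g.
Proof. unfold scal. rewrite (tensm_split1 s g). cnorm. crw (lunit_inv_nat g). reflexivity. Qed.

Lemma scal_idm_r (s : Hom C unit unit) {a b} (g : Hom C a b) : scal C s g = g \o scal C s (idm a).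
Proof. unfold scal. rewrite (tensm_split2 s g). cnorm. crw (lunit_nat g). reflexivity. Qed.

Lemma scal_idm_comp (s t : Hom C unit unit) {a} :
  scal C (s \o t) (idm a) = scal C s (idm a) \o scal C t (idm a).
Proof.
  unfold scal. rewrite <- (comp_id_l (idm a)) at 1. rewrite tensm_comp. cnorm.
  crw (@lunit_inv_l C a). reflexivity.
Qed.

(* Tensoring with [J] and using [I \ox J ~ unit] transports [s \ox idm I = idm] to
   [s \ox idm unit = idm], i.e. to [s = idm unit]. *)
Lemma scal_idm_inj (s : Hom C unit unit) (I : Ob C) :
  invertible C I -> scal C s (idm I) = idm I -> s = idm unit.
Proof.
  intros [J [u [v [Hvu Huv]]]] E.
  assert (EI : s \ox idm I = idm _).
  { unfold scal in E. apply (split_mono_cancel (lunit I) (lunit_inv I) lunit_inv_l).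
    apply (split_epi_cancel (lunit_inv I) (lunit I) lunit_inv_l).
    cnorm. rewrite E, lunit_inv_r. reflexivity. }
  assert (EIJ : s \ox idm (tens I J) = idm _).
  { apply (split_epi_cancel (assoc unit I J) (assoc_inv _ _ _) assoc_inv_r).
    rewrite <- tensm_id. crwl (assoc_nat s (idm I) (idm J)). rewrite EI, tensm_id. cnorm.
    reflexivity. }
  assert (Eunit : s \ox idm unit = idm _).
  { rewrite <- Huv.
    assert (X : s \ox (u \o v) = (idm unit \ox u) \o (s \ox idm (tens I J)) \o (idm unit \ox v)).
    { rewrite <- !tensm_comp. cnorm. reflexivity. }
    rewrite X, EIJ. cnorm. rewrite <- tensm_comp, comp_id_l, Huv, tensm_id. reflexivity. }
  transitivity (runit unit \o (s \ox idm unit) \o runit_inv unit).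
  { crw (runit_nat s). rewrite <- comp_assoc, runit_inv_r. cnorm. reflexivity. }
  rewrite Eunit. cnorm. apply runit_inv_r.
Qed.

End Scalars.

Section Shuffles.
Context {C : SymMonCat}.
Implicit Types a b c d p q r w x y z : Ob C.

Lemma pentagon1 a b c d : (assoc_inv a b c \ox idm d) \o assoc_inv a (tens b c) d
  = assoc_inv (tens a b) c d \o assoc_inv a b (tens c d) \o (idm a \ox assoc b c d).
Proof.
  apply (split_mono_cancel (assoc (tens a b) c d) (assoc_inv _ _ _) assoc_inv_l). cnorm.
  crw (@assoc_inv_r C (tens a b) c d).
  apply (split_mono_cancel (assoc a b (tens c d)) (assoc_inv _ _ _) assoc_inv_l).
  apply (split_epi_cancel (assoc a (tens b c) d \o (assoc a b c \ox idm d))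
           ((assoc_inv a b c \ox idm d) \o assoc_inv a (tens b c) d)).
  { cnorm. crw (tensm_idm_inv d (@assoc_inv_r C a b c)). apply assoc_inv_r. }
  cnorm. crw (@assoc_inv_r C a b (tens c d)). crw (@assoc_inv_l C a (tens b c) d).
  crw (tensm_idm_inv d (@assoc_inv_l C a b c)). rewrite pentagon'. reflexivity.
Qed.

Lemma pentagon2 a b c d : (assoc a b c \ox idm d) \o assoc_inv (tens a b) c d
  = assoc_inv a (tens b c) d \o (idm a \ox assoc_inv b c d) \o assoc a b (tens c d).
Proof.
  apply (split_mono_cancel (assoc a (tens b c) d) (assoc_inv _ _ _) assoc_inv_l). cnorm.
  crw (@assoc_inv_r C a (tens b c) d).
  apply (split_mono_cancel (idm a \ox assoc b c d) (idm a \ox assoc_inv b c d)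
           (idm_tensm_inv a assoc_inv_l)).
  apply (split_epi_cancel (assoc (tens a b) c d) (assoc_inv _ _ _) assoc_inv_r). cnorm.
  crw (@assoc_inv_l C (tens a b) c d). crw (idm_tensm_inv a (@assoc_inv_r C b c d)).
  rewrite pentagon'. reflexivity.
Qed.

Lemma pentagon3 a b c d : assoc (tens a b) c d \o (assoc_inv a b c \ox idm d)
  = assoc_inv a b (tens c d) \o (idm a \ox assoc b c d) \o assoc a (tens b c) d.
Proof.
  apply (split_mono_cancel (assoc a b (tens c d)) (assoc_inv _ _ _) assoc_inv_l). cnorm.
  crw (@assoc_inv_r C a b (tens c d)).
  apply (split_epi_cancel (assoc a b c \ox idm d) (assoc_inv a b c \ox idm d)
           (tensm_idm_inv d assoc_inv_r)). cnorm.
  crw (tensm_idm_inv d (@assoc_inv_l C a b c)). rewrite pentagon'. reflexivity.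
Qed.

Lemma pentagon3' a b c d : assoc (tens a b) c d \o (assoc_inv a b c \ox idm d)
    \o assoc_inv a (tens b c) d
  = assoc_inv a b (tens c d) \o (idm a \ox assoc b c d).
Proof.
  rewrite pentagon3. cnorm. crw (@assoc_inv_r C a (tens b c) d). reflexivity.
Qed.

Lemma pentagon4 a b c d : assoc a (tens b c) d \o (assoc a b c \ox idm d)
  = (idm a \ox assoc_inv b c d) \o assoc a b (tens c d) \o assoc (tens a b) c d.
Proof.
  apply (split_mono_cancel (idm a \ox assoc b c d) (idm a \ox assoc_inv b c d)
           (idm_tensm_inv a assoc_inv_l)). cnorm.
  crw (idm_tensm_inv a (@assoc_inv_r C b c d)). rewrite pentagon'. reflexivity.
Qed.

Lemma pentagon4' a b c d : assoc a (tens b c) d \o (assoc a b c \ox idm d)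
    \o assoc_inv (tens a b) c d
  = (idm a \ox assoc_inv b c d) \o assoc a b (tens c d).
Proof.
  rewrite pentagon4. cnorm. crw (@assoc_inv_r C (tens a b) c d). reflexivity.
Qed.

Lemma braid_tens_r a b c : braid a (tens b c)
  = assoc_inv b c a \o (idm b \ox braid a c) \o assoc b a c \o (braid a b \ox idm c)
    \o assoc_inv a b c.
Proof.
  apply (split_epi_cancel (assoc a b c) (assoc_inv a b c) assoc_inv_r).
  apply (split_mono_cancel (assoc b c a) (assoc_inv b c a) assoc_inv_l). cnorm.
  crw (@assoc_inv_r C b c a). crw (@assoc_inv_l C a b c). apply hexagon'.
Qed.

Lemma braid_tens_l a b c : braid (tens b c) a
  = assoc a b c \o (braid b a \ox idm c) \o assoc_inv b a c \o (idm b \ox braid c a)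
    \o assoc b c a.
Proof.
  apply (split_epi_cancel (braid a (tens b c)) (braid (tens b c) a) braid_sym).
  rewrite braid_sym, braid_tens_r. cnorm. crw (@assoc_inv_r C b c a).
  crw (idm_tensm_inv b (@braid_sym C a c)). crw (@assoc_inv_l C b a c).
  crw (tensm_idm_inv c (@braid_sym C a b)). rewrite assoc_inv_r. reflexivity.
Qed.

Lemma braid_tensm_nat {x x' y y' z z'} (f : Hom C x x') (g : Hom C y y') (h : Hom C z z') :
  (braid x' y' \ox idm z') \o ((f \ox g) \ox h) = ((g \ox f) \ox h) \o (braid x y \ox idm z).
Proof. rewrite <- !tensm_comp, braid_nat. cnorm. reflexivity. Qed.

Definition braid_front x y z : Hom C (tens x (tens y z)) (tens y (tens x z)) :=
  assoc y x z \o (braid x y \ox idm z) \o assoc_inv x y z.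

Definition middle_four w x y z :
  Hom C (tens (tens w x) (tens y z)) (tens (tens w y) (tens x z)) :=
  assoc_inv w y (tens x z) \o (idm w \ox braid_front x y z) \o assoc w x (tens y z).

Lemma middle_fourE w x y z : middle_four w x y z
  = assoc_inv w y (tens x z) \o (idm w \ox braid_front x y z) \o assoc w x (tens y z).
Proof. reflexivity. Qed.

Lemma braid_front_nat {x x' y y' z z'} (f : Hom C x x') (g : Hom C y y') (h : Hom C z z') :
  braid_front x' y' z' \o (f \ox (g \ox h)) = (g \ox (f \ox h)) \o braid_front x y z.
Proof.
  unfold braid_front. cnorm. crw (assoc_inv_nat f g h). crw (braid_tensm_nat f g h).
  crw (assoc_nat g f h). reflexivity.
Qed.

Lemma middle_four_nat {w w' x x' y y' z z'} (f : Hom C w w') (g : Hom C x x')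
  (h : Hom C y y') (k : Hom C z z') :
  middle_four w' x' y' z' \o ((f \ox g) \ox (h \ox k))
  = ((f \ox h) \ox (g \ox k)) \o middle_four w x y z.
Proof.
  rewrite !middle_fourE. cnorm. crw (assoc_nat f g (h \ox k)).
  crwl (tensm_comp f (idm w') (g \ox (h \ox k)) (braid_front x' y' z')).
  rewrite braid_front_nat, <- (comp_id_r f) at 1. rewrite tensm_comp. cnorm.
  crw (assoc_inv_nat f h (g \ox k)). reflexivity.
Qed.

Lemma braid_front_tens_mid x y1 y2 z : braid_front x (tens y1 y2) z
  = assoc_inv y1 y2 (tens x z) \o (idm y1 \ox braid_front x y2 z) \o braid_front x y1 (tens y2 z)
    \o (idm x \ox assoc y1 y2 z).
Proof.
  unfold braid_front. rewrite braid_tens_r, !comp_tensm_idm, !idm_tensm_comp. cnorm.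
  crw (pentagon1 x y1 y2 z). crwl (assoc_inv_nat (braid x y1) (idm y2) (idm z)).
  crw (pentagon2 y1 x y2 z). crwl (assoc_inv_nat (idm y1) (braid x y2) (idm z)).
  crw (pentagon3' y1 y2 x z). rewrite !tensm_id. reflexivity.
Qed.

Lemma braid_front_tens_first x1 x2 y z : braid_front (tens x1 x2) y z
  = (idm y \ox assoc_inv x1 x2 z) \o braid_front x1 y (tens x2 z) \o (idm x1 \ox braid_front x2 y z)
    \o assoc x1 x2 (tens y z).
Proof.
  unfold braid_front. rewrite braid_tens_l, !comp_tensm_idm, !idm_tensm_comp. cnorm.
  crw (pentagon2 x1 x2 y z). crwl (assoc_inv_nat (idm x1) (braid x2 y) (idm z)).
  crw (pentagon1 x1 y x2 z). crwl (assoc_inv_nat (braid x1 y) (idm x2) (idm z)).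
  crw (pentagon4' y x1 x2 z). rewrite !tensm_id. reflexivity.
Qed.

Lemma braid_front_assoc q x y w :
  assoc x (tens q y) w \o (braid_front q x y \ox idm w) \o assoc_inv q (tens x y) w
  = (idm x \ox assoc_inv q y w) \o braid_front q x (tens y w) \o (idm q \ox assoc x y w).
Proof.
  unfold braid_front. rewrite !comp_tensm_idm. cnorm. crw (pentagon4 x q y w).
  crw (pentagon1 q x y w). rewrite <- (tensm_id (a:=y) (b:=w)).
  crw (assoc_nat (braid q x) (idm y) (idm w)). rewrite tensm_id.
  crw (@assoc_inv_r C (tens q x) y w). reflexivity.
Qed.

Lemma braid_front_middle_four q r x y z :
  assoc x (tens q y) (tens r z) \o (braid_front q x y \ox idm (tens r z))
    \o assoc_inv q (tens x y) (tens r z) \o (idm q \ox braid_front r (tens x y) z)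
    \o assoc q r (tens (tens x y) z)
  = (idm x \ox middle_four q r y z) \o braid_front (tens q r) x (tens y z)
    \o (idm (tens q r) \ox assoc x y z).
Proof.
  crw (braid_front_assoc q x y (tens r z)).
  rewrite braid_front_tens_first. unfold middle_four at 1. rewrite !idm_tensm_comp. cnorm.
  crw (idm_tensm_inv x (@assoc_inv_r C q r (tens y z))).
  rewrite <- (tensm_id (a:=q) (b:=r)). crw (assoc_nat (idm q) (idm r) (assoc x y z)).
  crwl (braid_front_nat (idm q) (idm x) (braid_front r y z)).
  rewrite (braid_front_tens_mid r x y z), !idm_tensm_comp. cnorm.
  crw (idm_tensm_inv q (@assoc_inv_r C x y (tens r z))). reflexivity.
Qed.

(* The coherence behind the coassociativity of the tensor-product coalgebra. *)
Lemma middle_four_assoc p q r x y z :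
  assoc (tens p x) (tens q y) (tens r z) \o (middle_four p q x y \ox idm (tens r z))
    \o middle_four (tens p q) r (tens x y) z
  = (idm (tens p x) \ox middle_four q r y z) \o middle_four p (tens q r) x (tens y z)
    \o (assoc p q r \ox assoc x y z).
Proof.
  assert (E := f_equal (fun t => idm p \ox t) (braid_front_middle_four q r x y z)).
  simpl in E. rewrite !idm_tensm_comp in E. cnorm_in E.
  rewrite (middle_fourE p q x y), (middle_fourE (tens p q) r (tens x y) z),
    (middle_fourE p (tens q r) x (tens y z)), !comp_tensm_idm. cnorm.
  crw (pentagon3 p x (tens q y) (tens r z)).
  crw (assoc_nat (idm p) (braid_front q x y) (idm (tens r z))).
  crw (pentagon4' p q (tens x y) (tens r z)). rewrite <- (tensm_id (a:=p) (b:=q)).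
  crw (assoc_nat (idm p) (idm q) (braid_front r (tens x y) z)).
  crw (pentagon' p q r (tens (tens x y) z)). crw E.
  rewrite <- (tensm_id (a:=p) (b:=x)). crwl (assoc_inv_nat (idm p) (idm x) (middle_four q r y z)).
  rewrite (tensm_split2 (assoc p q r) (assoc x y z)). cnorm.
  rewrite <- (tensm_id (a:=p) (b:=tens q r)).
  crw (assoc_nat (idm p) (idm (tens q r)) (assoc x y z)). reflexivity.
Qed.

Lemma middle_four_lunit a b :
  (lunit unit \ox idm (tens a b)) \o middle_four unit a unit b \o (lunit_inv a \ox lunit_inv b)
  = lunit_inv (tens a b).
Proof.
  rewrite middle_fourE. unfold braid_front. rewrite braid_unit_r.
  rewrite (@comp_tensm_idm C _ _ _ b (lunit_inv a) (runit a)). cnorm.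
  rewrite <- (triangle a b). cnorm. crw (@assoc_inv_r C a unit b).
  crw (lunit_inv_tens a b). rewrite !idm_tensm_comp. cnorm.
  crwl (assoc_nat (idm unit) (idm a) (lunit b)). rewrite tensm_id.
  crwl (tensm_comp (lunit_inv a) (idm (tens unit a)) (lunit_inv b) (lunit b)).
  rewrite lunit_inv_r. cnorm.
  crw (lunit_inv_tens a b). crw (lunit_tens' unit (tens a b)).
  crw (lunit_nat (lunit_inv (tens a b))). crw (@lunit_inv_r C (tens a b)). reflexivity.
Qed.

Lemma middle_four_runit a b :
  (idm (tens a b) \ox lunit unit) \o middle_four a unit b unit \o (runit_inv a \ox runit_inv b)
  = runit_inv (tens a b).
Proof.
  rewrite middle_fourE. unfold braid_front. rewrite braid_unit_l, comp_tensm_idm. cnorm.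
  rewrite (postcomp2 (lunit_tens' b unit)).
  rewrite <- (tensm_id (a:=a) (b:=b)), <- (assoc_inv_nat (idm a) (idm b) (lunit unit)).
  crwl (@idm_tensm_comp C _ _ _ a (idm b \ox lunit unit)
          (assoc b unit unit \o (runit_inv b \ox idm unit) \o lunit (tens b unit))).
  crw (triangle b unit). crwl (@comp_tensm_idm C _ _ _ unit (runit b) (runit_inv b)).
  rewrite runit_inv_r, tensm_id. cnorm.
  crw (triangle a (tens b unit)).
  crwl (tensm_comp (runit_inv a) (runit a) (runit_inv b) (idm (tens b unit))).
  rewrite runit_inv_r. cnorm. apply runit_inv_tens.
Qed.

End Shuffles.

Section Convolution.
Context {C : SymMonCat} {A : Ob C} (H : HopfAlg A).

Lemma Delta_coassoc_inv :
  (Delta H \ox idm A) \o Delta H = assoc_inv A A A \o (idm A \ox Delta H) \o Delta H.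
Proof.
  apply (split_mono_cancel (assoc A A A) (assoc_inv _ _ _) assoc_inv_l). cnorm.
  crw (@assoc_inv_r C A A A). rewrite <- (Delta_coassoc H). cnorm. reflexivity.
Qed.

Lemma mu_assoc_inv : mu H \o (idm A \ox mu H) = mu H \o (mu H \ox idm A) \o assoc_inv A A A.
Proof.
  apply (split_epi_cancel (assoc A A A) (assoc_inv _ _ _) assoc_inv_r). cnorm.
  crw (@assoc_inv_l C A A A). rewrite (mu_assoc H). reflexivity.
Qed.

(* The comultiplication of the coalgebra [A \ox A]. *)
Definition Delta2 : Hom C (tens A A) (tens (tens A A) (tens A A)) :=
  middle_four A A A A \o (Delta H \ox Delta H).

Definition conv (F G : Hom C (tens A A) A) : Hom C (tens A A) A := mu H \o (F \ox G) \o Delta2.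

Definition conv_unit : Hom C (tens A A) A := eta H \o eps H \o mu H.

Lemma Delta_mu : Delta H \o mu H = (mu H \ox mu H) \o Delta2.
Proof. rewrite bialg_mult. unfold Delta2, middle_four, braid_front. cnorm. reflexivity. Qed.

Lemma conv_assoc F G K : conv (conv F G) K = conv F (conv G K).
Proof.
  unfold conv.
  assert (EFG : (mu H \o (F \ox G) \o Delta2) \ox K
                = (mu H \ox idm A) \o ((F \ox G) \ox K) \o (Delta2 \ox idm (tens A A))).
  { rewrite <- !tensm_comp. cnorm. reflexivity. }
  assert (EGK : F \ox (mu H \o (G \ox K) \o Delta2)
                = (idm A \ox mu H) \o (F \ox (G \ox K)) \o (idm (tens A A) \ox Delta2)).
  { rewrite <- !tensm_comp. cnorm. reflexivity. }
  rewrite EFG, EGK. cnorm. rewrite (mu_assoc H). cnorm. crw (assoc_nat F G K).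
  unfold Delta2. rewrite comp_tensm_idm, idm_tensm_comp. cnorm.
  rewrite <- (tensm_id (a:=A) (b:=A)).
  crwl (middle_four_nat (Delta H) (idm A) (Delta H) (idm A)).
  crwl (middle_four_nat (idm A) (Delta H) (idm A) (Delta H)).
  rewrite !tensm_id. crw (middle_four_assoc A A A A A A).
  assert (Ecoassoc : (assoc A A A \ox assoc A A A)
      \o ((Delta H \ox idm A) \ox (Delta H \ox idm A)) \o (Delta H \ox Delta H)
      = ((idm A \ox Delta H) \ox (idm A \ox Delta H)) \o (Delta H \ox Delta H)).
  { rewrite <- !tensm_comp. cnorm. rewrite (Delta_coassoc H). reflexivity. }
  crw Ecoassoc. reflexivity.
Qed.

Lemma eps_mu_Delta2_l : ((eps H \o mu H) \ox idm (tens A A)) \o Delta2 = lunit_inv (tens A A).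
Proof.
  rewrite (bialg_counit H), comp_tensm_idm. unfold Delta2. cnorm.
  assert (E : ((eps H \ox eps H) \ox idm (tens A A)) \o middle_four A A A A
              = middle_four unit A unit A \o ((eps H \ox idm A) \ox (eps H \ox idm A))).
  { rewrite middle_four_nat, tensm_id. reflexivity. }
  crw E. crwl (tensm_comp (Delta H) (eps H \ox idm A) (Delta H) (eps H \ox idm A)).
  rewrite (Delta_counit_l H). apply middle_four_lunit.
Qed.

Lemma eps_mu_Delta2_r : (idm (tens A A) \ox (eps H \o mu H)) \o Delta2 = runit_inv (tens A A).
Proof.
  rewrite (bialg_counit H), idm_tensm_comp. unfold Delta2. cnorm.
  assert (E : (idm (tens A A) \ox (eps H \ox eps H)) \o middle_four A A A A
              = middle_four A unit A unit \o ((idm A \ox eps H) \ox (idm A \ox eps H))).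
  { rewrite middle_four_nat, tensm_id. reflexivity. }
  crw E. crwl (tensm_comp (Delta H) (idm A \ox eps H) (Delta H) (idm A \ox eps H)).
  rewrite (Delta_counit_r H). apply middle_four_runit.
Qed.

Lemma conv_unit_l F : conv conv_unit F = F.
Proof.
  unfold conv, conv_unit.
  assert (E : (eta H \o eps H \o mu H) \ox F
              = (eta H \ox idm A) \o (idm unit \ox F) \o ((eps H \o mu H) \ox idm (tens A A))).
  { rewrite <- !tensm_comp. cnorm. reflexivity. }
  rewrite E. cnorm. rewrite (mu_unit_l H). crw (lunit_nat F).
  crw eps_mu_Delta2_l. crw (@lunit_inv_r C (tens A A)). reflexivity.
Qed.

Lemma conv_unit_r F : conv F conv_unit = F.
Proof.
  unfold conv, conv_unit.
  assert (E : F \ox (eta H \o eps H \o mu H)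
              = (idm A \ox eta H) \o (F \ox idm unit) \o (idm (tens A A) \ox (eps H \o mu H))).
  { rewrite <- !tensm_comp. cnorm. reflexivity. }
  rewrite E. cnorm. rewrite (mu_unit_r H). crw (runit_nat F).
  crw eps_mu_Delta2_r. crw (@runit_inv_r C (tens A A)). reflexivity.
Qed.

Lemma conv_S_mu_mu : conv (S H \o mu H) (mu H) = conv_unit.
Proof.
  unfold conv, conv_unit. rewrite <- (comp_id_l (mu H)) at 3. rewrite tensm_comp. cnorm.
  crwl Delta_mu. rewrite (antipode_l H). reflexivity.
Qed.

Definition mu_S_op : Hom C (tens A A) A := mu H \o (S H \ox S H) \o braid A A.

Lemma mu_S_op_braid_front : mu H \o (idm A \ox mu_S_op) \o braid_front A A A
  = mu H \o ((mu H \o (idm A \ox S H)) \ox S H) \o braid A (tens A A).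
Proof.
  unfold mu_S_op. rewrite !idm_tensm_comp. cnorm. rewrite mu_assoc_inv. cnorm.
  crw (assoc_inv_nat (idm A) (S H) (S H)). unfold braid_front. cnorm.
  crwl (braid_tens_r A A A).
  assert (E : (mu H \o (idm A \ox S H)) \ox S H = (mu H \ox idm A) \o ((idm A \ox S H) \ox S H)).
  { rewrite <- tensm_comp. cnorm. reflexivity. }
  rewrite E. cnorm. reflexivity.
Qed.

Lemma antipode_r_counit :
  mu H \o ((mu H \o (idm A \ox S H)) \ox S H) \o (Delta H \ox idm A) \o braid A A
  = S H \o runit A \o (idm A \ox eps H).
Proof.
  crwl (tensm_comp (Delta H) (mu H \o (idm A \ox S H)) (idm A) (S H)). cnorm.
  rewrite (antipode_r H).
  assert (E : (eta H \o eps H) \ox S H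
              = (eta H \ox idm A) \o (idm unit \ox S H) \o (eps H \ox idm A)).
  { rewrite <- !tensm_comp. cnorm. reflexivity. }
  rewrite E. cnorm. rewrite (mu_unit_l H), lunit_nat.
  crwl (braid_nat (idm A) (eps H)). crw (lunit_braid A). reflexivity.
Qed.

Lemma conv_mu_mu_S_op : conv (mu H) mu_S_op = conv_unit.
Proof.
  unfold conv, Delta2, conv_unit. rewrite middle_fourE, (tensm_split1 (mu H) mu_S_op). cnorm.
  rewrite (mu_assoc H). cnorm.
  rewrite <- (tensm_id (a:=A) (b:=A)). crw (assoc_nat (idm A) (idm A) mu_S_op).
  crw (@assoc_inv_r C A A (tens A A)).
  assert (I1 := f_equal (fun t => idm A \ox t) mu_S_op_braid_front).
  simpl in I1. rewrite !idm_tensm_comp in I1. cnorm_in I1.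
  assert (I2 := f_equal (fun t => idm A \ox t) antipode_r_counit).
  simpl in I2. rewrite !idm_tensm_comp in I2. cnorm_in I2.
  crw I1. rewrite (tensm_split2 (Delta H) (Delta H)). cnorm.
  rewrite <- (tensm_id (a:=A) (b:=A)). crw (assoc_nat (idm A) (idm A) (Delta H)).
  crwl (@idm_tensm_comp C _ _ _ A (braid A (tens A A)) (idm A \ox Delta H)).
  crw (braid_nat (idm A) (Delta H)).
  rewrite (@idm_tensm_comp C _ _ _ A (Delta H \ox idm A) (braid A A)). cnorm.
  crw I2. crwl (assoc_nat (idm A) (idm A) (eps H)). crwl (runit_tens A A). rewrite tensm_id.
  crwl (tensm_interchange (Delta H) (eps H)). crw (runit_nat (Delta H)). crw (antipode_r H).
  crwl (runit_nat (eps H)). crw (bialg_counit H). rewrite lunit_unit.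
  crwl (tensm_split1 (eps H) (eps H)). reflexivity.
Qed.

Lemma antipode_antimultiplicative : S H \o mu H = mu H \o (S H \ox S H) \o braid A A.
Proof.
  transitivity (conv (S H \o mu H) conv_unit). { symmetry. apply conv_unit_r. }
  rewrite <- conv_mu_mu_S_op, <- conv_assoc, conv_S_mu_mu, conv_unit_l. reflexivity.
Qed.

End Convolution.

Section Opposite.
Context {C : SymMonCat}.

Lemma pentagon_inv (a b c d : Ob C) :
  assoc_inv (tens a b) c d \o assoc_inv a b (tens c d)
  = (assoc_inv a b c \ox idm d) \o assoc_inv a (tens b c) d \o (idm a \ox assoc_inv b c d).
Proof.
  apply (split_mono_cancel (assoc a b (tens c d) \o assoc (tens a b) c d)
           (assoc_inv (tens a b) c d \o assoc_inv a b (tens c d))).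
  { cnorm. crw (@assoc_inv_l C a b (tens c d)). apply assoc_inv_l. }
  cnorm. crw (@assoc_inv_r C (tens a b) c d). crw (@assoc_inv_r C a b (tens c d)).
  rewrite pentagon'. cnorm. crw (tensm_idm_inv d (@assoc_inv_r C a b c)).
  crw (@assoc_inv_r C a (tens b c) d). crw (idm_tensm_inv a (@assoc_inv_r C b c d)).
  reflexivity.
Qed.

Lemma triangle_inv (a b : Ob C) :
  assoc_inv a unit b \o (idm a \ox lunit_inv b) = runit_inv a \ox idm b.
Proof.
  apply (split_mono_cancel (runit a \ox idm b) (runit_inv a \ox idm b)
           (tensm_idm_inv b runit_inv_l)).
  rewrite (tensm_idm_inv b (@runit_inv_r C a)), <- triangle. cnorm.
  crw (@assoc_inv_r C a unit b). crw (idm_tensm_inv a (@lunit_inv_r C b)). reflexivity.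
Qed.

End Opposite.

Definition opposite_cat (C : SymMonCat) : SymMonCat.
Proof.
  refine (@Build_SymMonCat (Ob C) (fun a b => Hom C b a) (fun a => idm a)
    (fun a b c g f => comp f g) _ _ _ (@tens C) (fun a b c d f g => tensm f g) _ _ (@unit C)
    (fun a b c => assoc_inv a b c) (fun a b c => assoc a b c) _ _ _
    (fun a => lunit_inv a) (fun a => lunit a) _ _ _
    (fun a => runit_inv a) (fun a => runit a) _ _ _ _ _ (fun a b => braid b a) _ _ _).
  - intros; apply comp_id_r.
  - intros; apply comp_id_l.
  - intros; simpl; symmetry; apply comp_assoc.
  - intros; apply tensm_id.
  - intros; apply tensm_comp.
  - intros; apply assoc_inv_l.
  - intros; apply assoc_inv_r.
  - intros; simpl; symmetry; apply assoc_inv_nat.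
  - intros; apply lunit_inv_l.
  - intros; apply lunit_inv_r.
  - intros; simpl; apply lunit_inv_nat.
  - intros; apply runit_inv_l.
  - intros; apply runit_inv_r.
  - intros; simpl; apply runit_inv_nat.
  - intros; simpl. rewrite pentagon_inv. cnorm. reflexivity.
  - intros; simpl. apply triangle_inv.
  - intros; simpl. symmetry. apply braid_nat.
  - intros; simpl. apply braid_sym.
  - intros; simpl. rewrite braid_tens_l. cnorm. crw (@assoc_inv_l C a b c).
    crw (@assoc_inv_r C b c a). reflexivity.
Defined.

Definition opposite_hopf {C : SymMonCat} {A : Ob C} (H : HopfAlg A) : @HopfAlg (opposite_cat C) A.
Proof.
  refine (@Build_HopfAlg (opposite_cat C) A (Delta H) (eps H) (mu H) (eta H) (S H)
            _ _ _ _ _ _ _ _ _ _ _ _ _); simpl.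
  - rewrite Delta_coassoc_inv. cnorm. reflexivity.
  - apply Delta_counit_l.
  - apply Delta_counit_r.
  - rewrite mu_assoc_inv. cnorm. reflexivity.
  - apply mu_unit_l.
  - apply mu_unit_r.
  - rewrite bialg_mult. cnorm. reflexivity.
  - apply bialg_counit.
  - apply bialg_unit.
  - apply bialg_eps_eta.
  - cnorm. apply antipode_l.
  - cnorm. apply antipode_r.
  - destruct (antipode_invertible H) as [v [E1 E2]]. exists v. split; assumption.
Defined.

Lemma antipode_anticomultiplicative {C : SymMonCat} {A : Ob C} (H : HopfAlg A) :
  Delta H \o S H = braid A A \o (S H \ox S H) \o Delta H.
Proof.
  pose proof (antipode_antimultiplicative (opposite_hopf H)) as E. simpl in E.
  rewrite E. cnorm. reflexivity.
Qed.

Section BraidsOnThree.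
Context {C : SymMonCat} (A : Ob C).

Let braid12 := assoc A A A \o (braid A A \ox idm A) \o assoc_inv A A A.
Let braid23 := idm A \ox braid A A.

Lemma braid12_invol : braid12 \o braid12 = idm _.
Proof.
  unfold braid12. cnorm. crw (@assoc_inv_l C A A A).
  crw (tensm_idm_inv A (@braid_sym C A A)). apply assoc_inv_r.
Qed.

Lemma braid23_invol : braid23 \o braid23 = idm _.
Proof. apply (idm_tensm_inv A braid_sym). Qed.

Lemma yang_baxter : braid23 \o braid12 \o braid23 = braid12 \o braid23 \o braid12.
Proof.
  assert (E := braid_nat (idm A) (braid A A)). rewrite braid_tens_r in E. cnorm_in E.
  apply (split_mono_cancel (assoc_inv A A A) (assoc A A A) assoc_inv_r).
  unfold braid23, braid12. cnorm. rewrite E. cnorm. crw (@assoc_inv_l C A A A). reflexivity.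
Qed.

(* Conjugating by the block braiding reverses the order of the three factors. *)
Lemma braid_conj_reverse :
  braid (tens A A) A \o (braid A A \ox idm A) \o assoc_inv A A A \o (idm A \ox braid A A)
    \o braid (tens A A) A
  = assoc A A A.
Proof.
  rewrite braid_tens_l. fold braid23.
  assert (E : assoc A A A \o (braid A A \ox idm A) \o assoc_inv A A A = braid12)
    by reflexivity.
  cnorm. repeat crw E. crwl yang_baxter. crw braid23_invol. crw braid23_invol.
  crw braid12_invol. reflexivity.
Qed.

End BraidsOnThree.

Section Involutory.
Context {C : SymMonCat} {A : Ob C} (H : HopfAlg A) (Hinv : S H \o S H = idm A).

Lemma S3_conj_braids :
  (((S H \ox S H) \o braid A A) \ox S H) \o assoc_inv A A A
    \o (S H \ox (braid A A \o (S H \ox S H)))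
  = (braid A A \ox idm A) \o assoc_inv A A A \o (idm A \ox braid A A).
Proof.
  assert (E1 : ((S H \ox S H) \o braid A A) \ox S H
               = ((S H \ox S H) \ox S H) \o (braid A A \ox idm A)).
  { rewrite <- tensm_comp. cnorm. reflexivity. }
  assert (E2 : S H \ox (braid A A \o (S H \ox S H))
               = (idm A \ox braid A A) \o (S H \ox (S H \ox S H))).
  { rewrite <- tensm_comp. cnorm. reflexivity. }
  assert (E3 : (idm A \ox braid A A) \o (S H \ox (S H \ox S H))
               = (S H \ox (S H \ox S H)) \o (idm A \ox braid A A)).
  { rewrite <- !tensm_comp. cnorm. rewrite braid_nat. reflexivity. }
  rewrite E1, E2. cnorm. crw E3. crw (assoc_inv_nat (S H) (S H) (S H)).
  crw (braid_tensm_nat (S H) (S H) (S H)).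
  crwl (tensm_comp (S H \ox S H) (S H \ox S H) (S H) (S H)).
  assert (SS : (S H \ox S H) \o (S H \ox S H) = idm (tens A A)).
  { rewrite <- tensm_comp, Hinv. apply tensm_id. }
  rewrite SS, Hinv, tensm_id. cnorm. reflexivity.
Qed.

Lemma Hmap'_conj : Hmap' H = braid A A \o (S H \ox S H) \o Hmap H \o (S H \ox S H) \o braid A A.
Proof.
  unfold Hmap, Hmap'. cnorm.
  crwl (tensm_comp (mu H) (S H) (idm A) (S H)). rewrite (antipode_antimultiplicative H). cnorm.
  crwl (tensm_comp (S H) (idm A) (S H) (Delta H)).
  rewrite (antipode_anticomultiplicative H). cnorm.
  assert (E1 : (mu H \o (S H \ox S H) \o braid A A) \ox S H
               = (mu H \ox idm A) \o (((S H \ox S H) \o braid A A) \ox S H)).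
  { rewrite <- tensm_comp. cnorm. reflexivity. }
  assert (E2 : S H \ox (braid A A \o (S H \ox S H) \o Delta H)
               = (S H \ox (braid A A \o (S H \ox S H))) \o (idm A \ox Delta H)).
  { rewrite <- tensm_comp. cnorm. reflexivity. }
  rewrite E1, E2. cnorm. crw S3_conj_braids.
  crw (braid_nat (mu H) (idm A)). crwl (braid_nat (Delta H) (idm A)).
  crw (braid_conj_reverse A). reflexivity.
Qed.

End Involutory.

Ltac merge_tensm := first [ rewrite (postcomp2 (eq_sym (tensm_comp _ _ _ _)))
                          | rewrite <- tensm_comp ]; cnorm.

(* [n] is the endomorphism [nu . id_I] of (GP3). *)
Section GoodPair.
Context {C : SymMonCat} {A I : Ob C} (H : HopfAlg A) (Hinv : S H \o S H = idm A)
  (phi : Hom C A I) (Om : Hom C I A) (n : Hom C I I) (f h : Hom C A A)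
  (phi_Om : phi \o Om = idm I)
  (phi_Hmap : (phi \ox phi) \o Hmap H = phi \ox phi)
  (Hmap_Om : Hmap H \o (Om \ox Om) = Om \ox Om)
  (phi_S : phi \o S H = n \o phi)
  (S_Om : S H \o Om = Om \o n)
  (phi_mu_braid : phi \o mu H \o braid A A = phi \o mu H \o (f \ox idm A))
  (Delta_Om_f : Delta H \o Om = (f \ox idm A) \o Delta H \o Om)
  (braid_Delta_Om : braid A A \o Delta H \o Om = (idm A \ox h) \o Delta H \o Om)
  (phi_mu_h : phi \o mu H = phi \o mu H \o (idm A \ox h)).

Lemma nu_action_invol : n \o n = idm I.
Proof.
  assert (E : n \o n \o phi = phi).
  { crwl phi_S. rewrite <- phi_S. crw Hinv. reflexivity. }
  rewrite <- (comp_id_r (n \o n)), <- phi_Om. cnorm. rewrite E. reflexivity.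
Qed.

Lemma nu_action_tensm_invol : (n \ox n) \o (n \ox n) = idm (tens I I).
Proof. rewrite <- tensm_comp, nu_action_invol. apply tensm_id. Qed.

Lemma phi_Hmap' : (phi \ox phi) \o Hmap' H = phi \ox phi.
Proof.
  rewrite (Hmap'_conj H Hinv). cnorm. rewrite <- (braid_nat phi phi).
  crwl (tensm_comp (S H) phi (S H) phi). rewrite phi_S, tensm_comp. cnorm.
  crw phi_Hmap. crwl (tensm_comp (S H) phi (S H) phi). rewrite phi_S, tensm_comp. cnorm.
  crw nu_action_tensm_invol. crwl (braid_nat phi phi). crw (@braid_sym C I I). reflexivity.
Qed.

Lemma Hmap'_Om : Hmap' H \o (Om \ox Om) = Om \ox Om.
Proof.
  rewrite (Hmap'_conj H Hinv). cnorm. crw (braid_nat Om Om).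
  crwl (tensm_comp Om (S H) Om (S H)). rewrite S_Om, tensm_comp. cnorm.
  crw Hmap_Om. crwl (tensm_comp Om (S H) Om (S H)). rewrite S_Om, tensm_comp. cnorm.
  crw nu_action_tensm_invol. crw (braid_nat Om Om). crw (@braid_sym C I I). reflexivity.
Qed.

Lemma Delta3_Om_f : ((f \ox idm A) \ox idm A) \o (Delta H \ox idm A) \o Delta H \o Om
  = (Delta H \ox idm A) \o Delta H \o Om.
Proof.
  crw (Delta_coassoc_inv H). crwl (assoc_inv_nat f (idm A) (idm A)). rewrite tensm_id.
  crw (tensm_interchange f (Delta H)). crwl Delta_Om_f. crw (Delta_coassoc_inv H).
  reflexivity.
Qed.

(* By (GP5) the cyclic rotation of the three factors of [Delta3 Om] acts as [h] on the
   last one; conjugating by this rotation moves [f] to the first slot. *)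
Lemma Delta3_Om_f_mid :
  ((idm A \ox f) \ox idm A) \o (Delta H \ox idm A) \o Delta H \o Om
  = (Delta H \ox idm A) \o Delta H \o Om.
Proof.
  assert (Rot : braid A (tens A A) \o assoc A A A \o (Delta H \ox idm A) \o Delta H \o Om
                = (idm (tens A A) \ox h) \o (Delta H \ox idm A) \o Delta H \o Om).
  { crw (Delta_coassoc H). crw (braid_nat (idm A) (Delta H)). crw braid_Delta_Om.
    crwl (tensm_interchange (Delta H) h). reflexivity. }
  apply (split_mono_cancel (braid A (tens A A) \o assoc A A A)
           (assoc_inv A A A \o braid (tens A A) A)).
  { cnorm. crw (@braid_sym C A (tens A A)). apply assoc_inv_l. }
  cnorm. crw (assoc_nat (idm A) f (idm A)). crw (braid_nat (idm A) (f \ox idm A)). crw Rot.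
  crw Rot. crw (tensm_interchange (f \ox idm A) h). crw Delta3_Om_f. reflexivity.
Qed.

Lemma Delta_Om_nu : Delta H \o Om \o n = (S H \ox (S H \o h)) \o Delta H \o Om.
Proof.
  crwl S_Om. crw (antipode_anticomultiplicative H). crw (braid_nat (S H) (S H)).
  crw braid_Delta_Om. merge_tensm. reflexivity.
Qed.

Lemma Delta3_Om_nu g :
  ((idm A \ox (g \o S H)) \ox idm A) \o (Delta H \ox idm A) \o Delta H \o Om \o n
  = ((braid A A \o (g \ox S H)) \ox (S H \o h)) \o (Delta H \ox idm A) \o Delta H \o Om.
Proof.
  crw Delta_Om_nu. merge_tensm. merge_tensm. merge_tensm.
  crw (antipode_anticomultiplicative H). crwl (braid_nat (g \o S H) (idm A)). merge_tensm.
  crw Hinv. reflexivity.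
Qed.

(* Precompose with the involution [n]: by [Delta3_Om_nu] both sides become expressions
   in which [f] sits in the first slot, where [Delta3_Om_f] removes it. *)
Lemma Delta3_Om_f_S :
  ((idm A \ox (f \o S H)) \ox idm A) \o (Delta H \ox idm A) \o Delta H \o Om
  = ((idm A \ox S H) \ox idm A) \o (Delta H \ox idm A) \o Delta H \o Om.
Proof.
  apply (split_epi_cancel n n nu_action_invol). cnorm.
  rewrite Delta3_Om_nu. rewrite <- (comp_id_l (S H)) at 3. rewrite Delta3_Om_nu.
  assert (E : (braid A A \o (f \ox S H)) \ox (S H \o h)
              = ((braid A A \o (idm A \ox S H)) \ox (S H \o h)) \o ((f \ox idm A) \ox idm A)).
  { rewrite <- !tensm_comp. cnorm. crwl (tensm_split2 f (S H)). reflexivity. }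
  rewrite E. cnorm. crw Delta3_Om_f. reflexivity.
Qed.

Lemma phi_mu3_h : phi \o mu H \o (mu H \ox idm A) \o (idm (tens A A) \ox h)
  = phi \o mu H \o (mu H \ox idm A).
Proof. crw (tensm_interchange (mu H) h). crwl phi_mu_h. reflexivity. Qed.

Lemma phi_mu3_h_mid :
  phi \o mu H \o (mu H \ox idm A) \o ((idm A \ox h) \ox idm A) = phi \o mu H \o (mu H \ox idm A).
Proof.
  assert (Rot : phi \o mu H \o (mu H \ox idm A) \o braid A (tens A A)
     = phi \o mu H \o (mu H \ox idm A) \o assoc_inv A A A \o (f \ox idm (tens A A))).
  { crwl (braid_nat (idm A) (mu H)). crw phi_mu_braid. crw (tensm_interchange f (mu H)).
    crw (mu_assoc_inv H). reflexivity. }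
  apply (split_epi_cancel (braid A (tens A A)) (braid (tens A A) A) braid_sym).
  crwl (braid_nat (idm A) (idm A \ox h)). crw Rot.
  crwl (tensm_split1 f (idm A \ox h)). crw (assoc_inv_nat f (idm A) h).
  rewrite (tensm_split2 (f \ox idm A) h). cnorm. crw phi_mu3_h.
  crwl (assoc_inv_nat f (idm A) (idm A)). rewrite tensm_id. reflexivity.
Qed.

Lemma phi_mu_mu_h : phi \o mu H \o (idm A \ox mu H) \o (idm A \ox (idm A \ox h))
  = phi \o mu H \o (idm A \ox mu H).
Proof.
  crw (mu_assoc_inv H). crw (assoc_inv_nat (idm A) (idm A) h). rewrite tensm_id.
  crw phi_mu3_h. reflexivity.
Qed.

Lemma phi_mu_mu_nu g :
  n \o phi \o mu H \o (idm A \ox mu H) \o (idm A \ox ((S H \o g) \ox idm A))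
  = phi \o mu H \o (idm A \ox mu H) \o ((f \o S H) \ox ((S H \ox g) \o braid A A)).
Proof.
  crwl phi_S. crw (antipode_antimultiplicative H). crwl (braid_nat (S H) (S H)).
  rewrite phi_mu_braid. merge_tensm. merge_tensm. crw (antipode_antimultiplicative H).
  crw (braid_nat (S H \o g) (idm A)). repeat merge_tensm. crw Hinv. reflexivity.
Qed.

Lemma phi_mu3_S_h :
  phi \o mu H \o (mu H \ox idm A) \o ((idm A \ox (S H \o h)) \ox idm A)
  = phi \o mu H \o (mu H \ox idm A) \o ((idm A \ox S H) \ox idm A).
Proof.
  crw (mu_assoc H). crw (assoc_nat (idm A) (S H \o h) (idm A)).
  crw (assoc_nat (idm A) (S H) (idm A)).
  apply (f_equal (fun t => t \o assoc A A A)).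
  apply (split_mono_cancel n n nu_action_invol). cnorm.
  rewrite phi_mu_mu_nu. rewrite <- (comp_id_r (S H)) at 3. rewrite phi_mu_mu_nu.
  assert (E : (f \o S H) \ox ((S H \ox h) \o braid A A)
              = (idm A \ox (idm A \ox h)) \o ((f \o S H) \ox ((S H \ox idm A) \o braid A A))).
  { rewrite <- !tensm_comp. cnorm. crwl (tensm_split2 (S H) h). reflexivity. }
  rewrite E. cnorm. crw phi_mu_mu_h. reflexivity.
Qed.

End GoodPair.

Theorem lemma3p1 (C : SymMonCat) (A I : Ob C) (H : HopfAlg A)
  (phi : Hom C A I) (Om : Hom C I A) (f h : Hom C A A) :
  involutory H ->
  good_pair H phi Om ->
  GP4 H phi Om f ->
  GP5 H phi Om h ->
  (* (a) *) nu H phi Om \o nu H phi Om = idm unit /\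
  (* (b) *) (phi \ox phi) \o Hmap' H = phi \ox phi /\
            Hmap' H \o (Om \ox Om) = Om \ox Om /\
  (* (c) *) (forall e : bool,
               ((idm A \ox (f \o Spow H e)) \ox idm A) \o Delta3 H \o Om
               = ((idm A \ox Spow H e) \ox idm A) \o Delta3 H \o Om) /\
  (* (d) *) (forall e : bool,
               phi \o mu3 H \o ((idm A \ox (Spow H e \o h)) \ox idm A)
               = phi \o mu3 H \o ((idm A \ox Spow H e) \ox idm A)).
Proof.
  intros Hinv [HI [G1 [G2a [G2b [G3a [G3b _]]]]]] [G4a G4b] [G5a G5b].
  unfold involutory in Hinv.
  set (n := scal C (nu H phi Om) (idm I)).
  assert (phi_S : phi \o S H = n \o phi) by (rewrite G3a; apply scal_idm_l).
  assert (S_Om : S H \o Om = Om \o n) by (rewrite G3b; apply scal_idm_r).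
  split; [| split; [| split; [| split]]].
  - apply (scal_idm_inj _ HI). rewrite scal_idm_comp. eapply nu_action_invol; eassumption.
  - eapply phi_Hmap'; eassumption.
  - eapply Hmap'_Om; eassumption.
  - intros [|]; simpl; unfold Delta3; cnorm.
    + eapply Delta3_Om_f_S; eassumption.
    + rewrite !tensm_id. cnorm. eapply Delta3_Om_f_mid; eassumption.
  - intros [|]; simpl; unfold mu3; cnorm.
    + eapply phi_mu3_S_h; eassumption.
    + rewrite !tensm_id. cnorm. eapply phi_mu3_h_mid; eassumption.
Qed.
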